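(* Let $a$ be an automatic sequence and $\alpha$ a letter such that the density of $\{n: a(n)=\alpha\}$ exists and equals $0$. Then the upper Banach density of $\{n:a(n)=\alpha\}$, namely $\limsup_{N-M\to\infty}\frac{\#\{M\le n\le N: a(n)=\alpha\}}{N-M+1}$, is also $0$.
   Context: A sequence $a$ on a finite alphabet is automatic if for some $k\ge2$ there is a finite set of states $Q$, a transition map $\delta:Q\times\{0,\dots,k-1\}\to Q$ extended to words letter by letter, an initial state $q_0$ and an output map $\tau$ with $a(n)=\tau(\delta(q_0,(n)_k))$, $(n)_k$ being the base-$k$ expansion of $n$ (most significant digit first). *)

From mathcomp Require Import all_boot all_order all_algebra.
Set Implicit Arguments. Unset Strict Implicit. Unset Printing Implicit Defensive.
Import Order.TTheory GRing.Theory Num.Theory.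
Local Open Scope ring_scope.

(* Base-b digits of n, least significant first, for b >= 2; (0)_b = empty word.
   [fuel] = n suffices since n %/ b < n for n > 0. *)
Fixpoint digits_lsb_aux (b fuel n : nat) : seq nat :=
  match fuel with
  | 0 => [::]
  | fuel'.+1 => if n == 0 then [::] else (n %% b)%N :: digits_lsb_aux b fuel' (n %/ b)%N
  end.

Definition base_expansion (k n : nat) : seq 'I_(k.+2) :=
  rev (map (fun d => inord d) (digits_lsb_aux k.+2 n n)).

Definition automatic (T : finType) (a : nat -> T) : Prop :=
  exists (k : nat) (Q : finType) (delta : Q -> 'I_(k.+2) -> Q) (q0 : Q) (tau : Q -> T),
    forall n, a n = tau (foldl delta q0 (base_expansion k n)).

Definition count_in (T : eqType) (a : nat -> T) (alpha : T) (M N : nat) : nat :=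
  count (fun n => a n == alpha) (iota M (N.+1 - M)%N).

Definition density_zero (T : eqType) (a : nat -> T) (alpha : T) : Prop :=
  forall eps : rat, 0 < eps -> exists N0 : nat, forall N : nat, (N0 <= N)%N -> (0 < N)%N ->
    (count (fun n => a n == alpha) (iota 0 N))%:R / N%:R <= eps.

Definition upper_banach_density_zero (T : eqType) (a : nat -> T) (alpha : T) : Prop :=
  forall eps : rat, 0 < eps -> exists L : nat, forall M N : nat, (M <= N)%N -> (L <= N - M)%N ->
    (count_in a alpha M N)%:R / (N - M).+1%:R <= eps.

(** The block of length b^L starting at m b^L (m > 0) consists of the integers
    whose base-b expansion is that of m followed by L digits, so its pattern of
    letters depends only on the state of the automaton after reading m.  As the
    automaton has finitely many states, each reached from some m <= B, every such
    block contains at most as many occurrences of alpha as the initial segment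
    [0, (B+1) b^L), which by density zero is a small fraction of b^L.  An interval
    of length at least b^L is covered by at most three times as many blocks as its
    length divided by b^L, hence contains a small proportion of occurrences. *)

From mathcomp Require Import all_boot all_order all_algebra.
From mathcomp Require Import zify ring.
From Stdlib Require Import Classical.

Set Implicit Arguments.
Unset Strict Implicit.
Unset Printing Implicit Defensive.
Import Order.TTheory GRing.Theory Num.Theory.

Lemma digits_lsb_aux_fuel b f1 f2 n : 1 < b -> n <= f1 -> n <= f2 ->
  digits_lsb_aux b f1 n = digits_lsb_aux b f2 n.
Proof.
move=> b_gt1; elim: f1 f2 n => [|f1 IH] [|f2] n /=; rewrite ?leqn0.
- by [].
- by move/eqP->.
- by move=> _ /eqP->.
case: eqP => // /eqP n_neq0 le_n_f1 le_n_f2.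
have lt_nb_n : n %/ b < n by rewrite ltn_Pdiv ?lt0n.
by congr (_ :: _); apply: IH; lia.
Qed.

Lemma digits_lsb_aux_step b m r : 1 < b -> 0 < m -> r < b ->
  digits_lsb_aux b (m * b + r) (m * b + r) = r :: digits_lsb_aux b m m.
Proof.
move=> b_gt1 m_gt0 r_lt_b.
have lt_m_mb : m < m * b by rewrite ltn_Pmulr.
case E: (m * b + r) => [|f]; first by lia.
rewrite /= -E modnMDl modn_small // divnMDl ?(ltnW b_gt1) // divn_small // addn0.
by congr (_ :: _); apply: digits_lsb_aux_fuel => //; lia.
Qed.

Fixpoint low_digits (b L r : nat) : seq nat :=
  if L is L'.+1 then r %% b :: low_digits b L' (r %/ b) else [::].

Lemma digits_lsb_aux_block b L m r : 1 < b -> 0 < m -> r < b ^ L ->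
  digits_lsb_aux b (m * b ^ L + r) (m * b ^ L + r) =
  low_digits b L r ++ digits_lsb_aux b m m.
Proof.
move=> b_gt1; elim: L m r => [|L IH] m r m_gt0.
  by rewrite expn0 ltnS leqn0 => /eqP->; rewrite muln1 addn0.
move=> r_lt; have b_gt0 := ltnW b_gt1.
have -> : m * b ^ L.+1 + r = (m * b ^ L + r %/ b) * b + r %% b.
  by rewrite mulnDl -mulnA -expnSr -addnA -divn_eq.
rewrite digits_lsb_aux_step ?ltn_mod ?IH ?ltn_divLR -?expnSr //.
by rewrite ltn_addr // muln_gt0 m_gt0 expn_gt0 b_gt0.
Qed.

Lemma base_expansion_block k L m r : 0 < m -> r < k.+2 ^ L ->
  base_expansion k (m * k.+2 ^ L + r) =
  base_expansion k m ++ rev (map inord (low_digits k.+2 L r)).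
Proof.
by move=> m_gt0 r_lt; rewrite /base_expansion digits_lsb_aux_block // map_cat rev_cat.
Qed.

Lemma bounded_preimages (Q : finType) (f : nat -> Q) :
  exists B, forall m, exists2 m', m' <= B & f m' = f m.
Proof.
suff [B HB] : exists B, forall m, f m \in enum Q -> exists2 m', m' <= B & f m' = f m.
  by exists B => m; apply: HB; rewrite mem_enum.
elim: (enum Q) => [|q s [B IH]]; first by exists 0.
have [[m0 f_m0]|no_preimage] := classic (exists m0, f m0 = q).
  exists (maxn B m0) => m; rewrite inE => /orP[/eqP->|/IH[m' le_m'B f_m']].
    by exists m0; rewrite ?leq_maxr.
  by exists m'; rewrite ?leq_max ?le_m'B.
exists B => m; rewrite inE => /orP[/eqP f_m|]; last exact: IH.
by case: no_preimage; exists m.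
Qed.

Lemma count_iota_sub (P : pred nat) M l M' l' : M' <= M -> M + l <= M' + l' ->
  count P (iota M l) <= count P (iota M' l').
Proof.
move=> le_M'M le_end.
have -> : l' = (M - M') + (l + (M' + l' - (M + l))) by lia.
rewrite !iotaD !count_cat subnKC //; lia.
Qed.

Section Blocks.

Variables (P : pred nat) (K c : nat).
Hypothesis block_count_le : forall m, count P (iota (m * K) K) <= c.

Lemma count_blocks_le n s : count P (iota (s * K) (n * K)) <= n * c.
Proof.
elim: n s => [|n IH] s; first by rewrite mul0n.
rewrite mulSn iotaD count_cat -mulSnr (mulSn n c).
by rewrite leq_add ?block_count_le ?IH.
Qed.

Lemma count_interval_mul_le M N : 0 < K -> K <= N - M ->
  count P (iota M (N.+1 - M)) * K <= 3 * (N - M).+1 * c.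
Proof.
move=> K_gt0 K_le; set n := (N %/ K).+1 - M %/ K.
have cover : count P (iota M (N.+1 - M)) <= n * c.
  apply: leq_trans (count_blocks_le n (M %/ K)).
  apply: count_iota_sub; first exact: leq_divM.
  have le_MN : M <= N by lia.
  have := ltn_ceil N K_gt0; have := leq_div2r K le_MN.
  rewrite /n mulnBl; nia.
have n_blocks : n * K <= 3 * (N - M).+1.
  have := leq_divM N K; have := ltn_ceil M K_gt0.
  rewrite /n mulnBl mulSn; lia.
apply: leq_trans (leq_mul cover (leqnn K)) _.
by rewrite mulnAC leq_mul2r n_blocks orbT.
Qed.

End Blocks.

Lemma automatic_block_count_le_prefix (T : finType) (a : nat -> T) (alpha : T) :
  automatic a -> exists b B, 1 < b /\ forall L m,
    count (fun n => a n == alpha) (iota (m * b ^ L) (b ^ L)) <=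
    count (fun n => a n == alpha) (iota 0 (B.+1 * b ^ L)).
Proof.
move=> [k [Q [delta [q0 [tau a_E]]]]].
pose state m := foldl delta q0 (base_expansion k m).
have [B HB] := bounded_preimages (state \o succn).
exists k.+2, B.+1; split=> // L m; set K := k.+2 ^ L.
have block_state m1 m2 : state m1.+1 = state m2.+1 ->
    count (fun n => a n == alpha) (iota (m1.+1 * K) K) =
    count (fun n => a n == alpha) (iota (m2.+1 * K) K).
  move=> same_state; rewrite -(addn0 (m1.+1 * K)) -(addn0 (m2.+1 * K)) !iotaDl !count_map.
  apply: eq_in_count => r; rewrite mem_iota add0n => /andP[_ r_lt] /=.
  by rewrite !a_E !base_expansion_block // !foldl_cat -/(state _) same_state.
case: m => [|m]; first by apply: count_iota_sub; rewrite ?leq_pmull.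
have [m' le_m'B same_state] := HB m.
rewrite -(block_state _ _ same_state); apply: count_iota_sub => //.
by rewrite add0n -mulSnr leq_mul2r !ltnS le_m'B orbT.
Qed.

Local Open Scope ring_scope.

Theorem lemma3p7 (T : finType) (a : nat -> T) (alpha : T) :
  automatic a -> density_zero a alpha -> upper_banach_density_zero a alpha.
Proof.
move=> /(automatic_block_count_le_prefix alpha)[b [B [b_gt1 block_le]]] dens eps eps_gt0.
pose eta : rat := eps / (3 * B.+1)%:R.
have eta_gt0 : 0 < eta by rewrite divr_gt0 ?ltr0n.
have [N0 HN0] := dens eta eta_gt0.
pose K := (b ^ N0)%N; pose c := count (fun n => a n == alpha) (iota 0 (B.+1 * K)).
have K_gt0 : (0 < K)%N by rewrite expn_gt0 ltnW.
have c_le : c%:R <= eta * (B.+1 * K)%:R.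
  rewrite -ler_pdivrMr ?ltr0n ?muln_gt0 ?K_gt0 //; apply: HN0; last by rewrite muln_gt0 K_gt0.
  exact: leq_trans (ltnW (ltn_expl _ b_gt1)) (leq_pmull _ _).
exists K => M N _ K_le.
rewrite ler_pdivrMr ?ltr0n // -(@ler_pM2r _ K%:R) ?ltr0n // -natrM.
apply: (@le_trans _ _ (3 * (N - M).+1 * c)%:R).
  by rewrite ler_nat; have := count_interval_mul_le (block_le N0) K_gt0 K_le.
rewrite natrM; apply: le_trans (ler_wpM2l (ler0n _ _) c_le) _.
rewrite le_eqVlt; apply/predU1l; rewrite /eta !natrM; field.
by rewrite addrC natr1 pnatr_eq0.
Qed.
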